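(* Let $G=(U\sqcup V,E)$ be a bipartite graph with integer weights $w:E\to\mathbb{Z}$ having a perfect matching, and let $n=|U|=|V|$. Let $0<\epsilon\le 1/(n+1)$, let $M$ be a perfect matching of $G$ and let $\pi_\epsilon:U\to\mathbb{R}$, $p_\epsilon:V\to\mathbb{R}$ satisfy $\pi_\epsilon(u)+p_\epsilon(v)\le w(uv)+\epsilon$ for all $uv\in E$ and $\pi_\epsilon(u)+p_\epsilon(v)=w(uv)$ for all $uv\in M$. Let $t\in\{0,1,\ldots,n\}$ be any integer such that \[ t\neq \big\lceil (n+1)(\lceil p_\epsilon(v)\rceil-p_\epsilon(v))\big\rceil \bmod (n+1)\quad\text{for all } v\in V \] (such $t$ exists). Define $p(v)=\lfloor p_\epsilon(v)+t/(n+1)\rfloor$ for all $v\in V$ and $\pi(u)=w(uv)-p(v)$ for each $uv\in M$. Then $P=(\pi,p)$ is an optimal solution of the dual assignment program \[ \max \sum_{u\in U}\pi(u)+\sum_{v\in V}p(v)\quad\text{subject to}\quad \pi(u)+p(v)\le w(uv)\ \ \forall uv\in E . \]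
   Context: A matching is a set of pairwise vertex-disjoint edges; it is perfect if it covers all vertices. The dual assignment program above is the linear-programming dual of the assignment (minimum weight perfect matching) linear program $\min\sum_{uv\in E}x(uv)w(uv)$ subject to $\sum_{v:uv\in E}x(uv)=1$ for all $u\in U$, $\sum_{u:uv\in E}x(uv)=1$ for all $v\in V$, $x\ge0$. *)

From HB Require Import structures.
From mathcomp Require Import all_boot all_order all_algebra.
Set Implicit Arguments. Unset Strict Implicit. Unset Printing Implicit Defensive.
Import Order.TTheory GRing.Theory Num.Theory.
Local Open Scope ring_scope.

(* A bipartite graph G = (U ⊔ V, E): U, V finite types, E : {set U * V}
   the edge set (edge uv is the pair (u, v)). *)

Definition is_perfect_matching (U V : finType) (E M : {set U * V}) : Prop :=
  [/\ M \subset E,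
      (forall u, exists v, (u, v) \in M),
      (forall v, exists u, (u, v) \in M),
      (forall u v v', (u, v) \in M -> (u, v') \in M -> v = v') &
      (forall u u' v, (u, v) \in M -> (u', v) \in M -> u = u')].

Definition has_perfect_matching (U V : finType) (E : {set U * V}) : Prop :=
  exists M, is_perfect_matching E M.

Definition dual_feasible (R : numDomainType) (U V : finType) (E : {set U * V})
    (w : U -> V -> int) (pi : U -> R) (p : V -> R) : Prop :=
  forall u v, (u, v) \in E -> pi u + p v <= (w u v)%:~R.

Definition dual_value (R : numDomainType) (U V : finType)
    (pi : U -> R) (p : V -> R) : R :=
  \sum_(u : U) pi u + \sum_(v : V) p v.

Definition dual_optimal (R : numDomainType) (U V : finType) (E : {set U * V})
    (w : U -> V -> int) (pi : U -> R) (p : V -> R) : Prop :=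
  dual_feasible E w pi p /\
  forall (pi' : U -> R) (p' : V -> R), dual_feasible E w pi' p' ->
    dual_value pi' p' <= dual_value pi p.

(* Since |V| = n < n + 1, some t <= n misses every residue
   ceil((n+1)(ceil(p_e v) - p_e v)) mod (n+1).  For such t each p_e v + t/(n+1)
   has fractional part at least 1/(n+1), so rounding it down lowers it by at
   least 1/(n+1) >= eps and by less than 1.  With pi read off the matching,
   every pi u + p v is then an integer below w u v + 1, so (pi, p) is feasible;
   it is tight on the perfect matching M, hence optimal by weak duality. *)

From HB Require Import structures.
From mathcomp Require Import all_boot all_order all_algebra.
From mathcomp Require Import lra.
Set Implicit Arguments. Unset Strict Implicit. Unset Printing Implicit Defensive.
Import Order.TTheory GRing.Theory Num.Theory.
Local Open Scope ring_scope.

Lemma exists_residue_avoiding (T : finType) (N : nat) (h : T -> int) :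
  (#|T| < N)%N -> exists2 t : nat, (t < N)%N & forall x, t%:Z != (h x %% N%:Z)%Z.
Proof.
move=> hTN; pose g x := absz (h x %% N%:Z)%Z.
have /allPn[t]: ~~ all (mem (map g (enum T))) (iota 0 N).
  apply: contraTN hTN => /allP sub; rewrite -leqNgt.
  by rewrite -(size_iota 0 N) cardE -(size_map g) uniq_leq_size ?iota_uniq.
rewrite mem_iota add0n => ht /mapP gt_notin; exists t => // x.
by apply/eqP => htx; apply: gt_notin; exists x; rewrite ?mem_enum // /g -htx.
Qed.

Lemma floor_shift_le (R : archiRealFieldType) (N t : nat) (x : R) :
  (t < N)%N -> t%:Z != (Num.ceil (N%:R * ((Num.ceil x)%:~R - x)) %% N%:Z)%Z ->
  (Num.floor (x + t%:R / N%:R))%:~R <= x + t%:R / N%:R - 1 / N%:R.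
Proof.
(* A fractional part below [1/N] would put [N (c - x)] in [(k - 1, k]] for
   [k = (c - m) N + t], making [t] the forbidden residue. *)
move=> ltNt; apply: contraNT; rewrite -ltNge.
have N_gt0 : 0 < N%:R :> R by rewrite ltr0n (leq_ltn_trans _ ltNt).
set c := Num.ceil x; set m := Num.floor _ => gap_lt.
have m_le : m%:~R <= x + t%:R / N%:R by apply: floor_le.
have Nshift : N%:R * (t%:R / N%:R) = t%:R :> R by rewrite mulrC divfK ?gt_eqF.
rewrite -(ltr_pM2l N_gt0) mulrBr mulrDr Nshift mulrA mulr1 divff ?gt_eqF // in gap_lt.
rewrite -(ler_pM2l N_gt0) mulrDr Nshift in m_le.
suff -> : Num.ceil (N%:R * (c%:~R - x)) = (c - m) * N%:Z + t%:Z.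
  by rewrite modzMDl modz_small ?ltz_nat ?ltNt.
apply: ceil_def; rewrite !(intrD, intrM, intrB, intrN) -!pmulrn mulrC !mulrBr.
apply/andP; split; lra.
Qed.

Section DualAssignment.

Variables (U V : finType) (E : {set U * V}) (w : U -> V -> int).

Lemma perfect_matching_bij (M : {set U * V}) : is_perfect_matching E M ->
  exists2 f : U -> V, bijective f & forall u, (u, f u) \in M.
Proof.
case=> _ coverU coverV uniqV uniqU.
pose f u := xchoose (coverU u); pose g v := xchoose (coverV v).
have Mf u : (u, f u) \in M := xchooseP (coverU u).
have Mg v : (g v, v) \in M := xchooseP (coverV v).
exists f => //; exists g => [u | v]; first exact: uniqU (Mg (f u)) (Mf u).
exact: uniqV (Mf (g v)) (Mg v).
Qed.

Lemma dual_value_bij (R : numDomainType) (pi : U -> R) (p : V -> R) (f : U -> V) :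
  bijective f -> dual_value pi p = \sum_u (pi u + p (f u)).
Proof.
by move=> f_bij; rewrite big_split /dual_value (reindex f) //; apply: onW_bij.
Qed.

Lemma dual_optimal_tight (R : numDomainType) (M : {set U * V})
    (pi : U -> R) (p : V -> R) :
  is_perfect_matching E M -> dual_feasible E w pi p ->
  (forall u v, (u, v) \in M -> pi u + p v = (w u v)%:~R) ->
  dual_optimal E w pi p.
Proof.
move=> M_perfect feas tight; split=> // pi' p' feas'.
have [f f_bij Mf] := perfect_matching_bij M_perfect.
have [ME _ _ _ _] := M_perfect.
rewrite !(dual_value_bij _ _ f_bij); apply: ler_sum => u _.
by rewrite tight //; apply: feas'; apply: subsetP ME _ (Mf u).
Qed.

Lemma rounded_dual_feasible (R : realDomainType) (M : {set U * V})
    (eps delta : R) (pi_e : U -> R) (p_e : V -> R) (pi : U -> int) (p : V -> int) :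
  (forall u, exists v, (u, v) \in M) ->
  (forall u v, (u, v) \in E -> pi_e u + p_e v <= (w u v)%:~R + eps) ->
  (forall u v, (u, v) \in M -> pi_e u + p_e v = (w u v)%:~R) ->
  (forall v, p_e v + delta - 1 < (p v)%:~R) ->
  (forall v, (p v)%:~R <= p_e v + delta - eps) ->
  (forall u v, (u, v) \in M -> pi u = w u v - p v) ->
  dual_feasible E w (fun u => (pi u)%:~R : R) (fun v => (p v)%:~R : R).
Proof.
move=> coverU feas tight p_gt p_le pi_def u v uv_E /=.
have [v0 uv0_M] := coverU u.
have := feas _ _ uv_E; have := tight _ _ uv0_M.
have := p_gt v0; have := p_le v.
rewrite -intrD ler_int -ltzD1 -(ltr_int R) !intrD (pi_def _ _ uv0_M) intrB.
lra.
Qed.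

End DualAssignment.

Theorem proposition2p8 (R : archiRealFieldType) (U V : finType)
    (E : {set U * V}) (w : U -> V -> int)
    (hasPM : has_perfect_matching E)
    (n : nat) (hnU : #|U| = n) (hnV : #|V| = n)
    (eps : R) (heps0 : 0 < eps) (heps1 : eps <= 1 / (n.+1)%:R)
    (M : {set U * V}) (hM : is_perfect_matching E M)
    (pi_e : U -> R) (p_e : V -> R)
    (hfeas : forall u v, (u, v) \in E -> pi_e u + p_e v <= (w u v)%:~R + eps)
    (htight : forall u v, (u, v) \in M -> pi_e u + p_e v = (w u v)%:~R) :
  let good (t : nat) : Prop :=
    forall v : V,
      (t%:Z != (Num.ceil ((n.+1)%:R * ((Num.ceil (p_e v))%:~R - p_e v))
                  %% (n.+1)%:Z)%Z) in
  (exists t : nat, (t <= n)%N /\ good t) /\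
  (forall t : nat, (t <= n)%N -> good t ->
     let p : V -> int := fun v => Num.floor (p_e v + t%:R / (n.+1)%:R) in
     forall pi : U -> int,
       (forall u v, (u, v) \in M -> pi u = w u v - p v) ->
       dual_optimal E w (fun u => (pi u)%:~R : R) (fun v => (p v)%:~R : R)).
Proof.
move=> good; split.
  have [|t le_tn t_good] := @exists_residue_avoiding V n.+1
    (fun v => Num.ceil ((n.+1)%:R * ((Num.ceil (p_e v))%:~R - p_e v))).
    by rewrite hnV.
  by exists t.
move=> t le_tn t_good p pi pi_def.
have [_ coverU _ _ _] := hM.
apply: (dual_optimal_tight hM) => [|u v uv_M].
  apply: (rounded_dual_feasible (delta := t%:R / n.+1%:R) coverU hfeas htight
            _ _ pi_def) => v.
    by rewrite ltrBlDr -[1 in X in _ < X]/(1%:~R) -intrD; apply: floorD1_gt.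
  apply: le_trans (floor_shift_le (N := n.+1) le_tn (t_good v)) _.
  by rewrite lerD2l lerN2.
by rewrite (pi_def _ _ uv_M) intrB subrK.
Qed.
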